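(* Let $\beta\ge1$ and consider the GBDF3 coefficients $(a_0,a_1,a_2)=\big(\tfrac{3\beta^2+6\beta+2}{6},\tfrac{-6\beta^2-6\beta+5}{6},\tfrac{3\beta^2-1}{6}\big)$, $(b_0,\dots,b_3)=\big(\tfrac{\beta^2+\beta}{2},1-\beta^2,\tfrac{\beta^2-\beta}{2},0\big)$, $(c_0,c_1,c_2)=\big(\tfrac{\beta^2+3\beta+2}{2},-2\beta-\beta^2,\tfrac{\beta^2+\beta}{2}\big)$. Then $$\sigma_{\mathrm{F}}=1,\quad\sigma_{\mathrm{E}}=\frac{6\beta^2+12\beta+3}{6\beta^2+6\beta-2},\quad\frac{6\beta^2-4}{6\beta^2+6\beta-2}\le\lambda_{\mathrm{I}}\le\frac{6\beta^2-3}{6\beta^2+6\beta-2},$$ so that $\dfrac{6\beta^2-4}{6\beta^2+12\beta+3}\le\mathfrak{I}_{\mathrm{IE}}\le\dfrac{6\beta^2-3}{6\beta^2+12\beta+3}$.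
   Context: For coefficient vectors $(a_j)_{j=0}^{\mathrm{k}-1}$, $(b_j)_{j=0}^{\mathrm{k}}$, $(c_j)_{j=0}^{\mathrm{k}-1}$ define $a(\theta)=\sum_j a_je^{\imath j\theta}$, $b(\theta)=\sum_j b_je^{\imath j\theta}$, $c(\theta)=\sum_jc_je^{\imath j\theta}$ and $\sigma_{\mathrm{F}}=\max_{\theta\in[0,2\pi)}|1/a(\theta)|$, $\sigma_{\mathrm{E}}=\max_{\theta\in[0,2\pi)}|c(\theta)/a(\theta)|$, $\lambda_{\mathrm{I}}=\min_{\theta\in[0,2\pi)}\Re[b(\theta)/a(\theta)]$, $\mathfrak{I}_{\mathrm{IE}}=\lambda_{\mathrm{I}}/\sigma_{\mathrm{E}}$. Here $\mathrm{k}=3$. *)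

From Stdlib Require Import Reals List.
From Coquelicot Require Import Coquelicot.
Open Scope R_scope.

Definition cexpi (x : R) : C := (cos x, sin x).

Fixpoint trig_aux (l : list R) (j0 : nat) (theta : R) : C :=
  match l with
  | nil => 0%C
  | x :: l' => Cplus (Cmult (RtoC x) (cexpi (INR j0 * theta))) (trig_aux l' (S j0) theta)
  end.

(* p(theta) = sum_{j=0}^{length l - 1} l_j e^{i j theta} *)
Definition trig (l : list R) (theta : R) : C := trig_aux l 0 theta.

Definition is_max_on_circle (f : R -> R) (v : R) : Prop :=
  (exists t, 0 <= t < 2 * PI /\ f t = v) /\
  (forall t, 0 <= t < 2 * PI -> f t <= v).

Definition is_min_on_circle (f : R -> R) (v : R) : Prop :=
  (exists t, 0 <= t < 2 * PI /\ f t = v) /\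
  (forall t, 0 <= t < 2 * PI -> v <= f t).

Definition gbdf3_a (be : R) : list R :=
  ((3*be^2 + 6*be + 2)/6) :: ((-6*be^2 - 6*be + 5)/6) :: ((3*be^2 - 1)/6) :: nil.
Definition gbdf3_b (be : R) : list R :=
  ((be^2 + be)/2) :: (1 - be^2) :: ((be^2 - be)/2) :: 0 :: nil.
Definition gbdf3_c (be : R) : list R :=
  ((be^2 + 3*be + 2)/2) :: (-2*be - be^2) :: ((be^2 + be)/2) :: nil.

(* the functions whose max / min define sigma_F, sigma_E, lambda_I *)
Definition fF (a : list R) (t : R) : R := Cmod (Cinv (trig a t)).
Definition fE (a c : list R) (t : R) : R := Cmod (Cdiv (trig c t) (trig a t)).
Definition fI (a b : list R) (t : R) : R := fst (Cdiv (trig b t) (trig a t)).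

(** On the unit circle, |a|^2, |c|^2 and Re(b conj a) are quadratic polynomials
    in x = cos theta.  In the variable y = 1 - x in [0, 2] they read
    1 + y/6 + K y^2, 1 + A y^2 and 1 - y/6 + M y^2 with K, A > 0 for beta >= 1.
    Hence |a| >= 1 with equality at theta = 0, which gives sigma_F = 1.
    E^2 |a|^2 - D^2 |c|^2 factors as (2 - y) times a positive linear term
    (D = 6 beta^2 + 6 beta - 2, E = 6 beta^2 + 12 beta + 3), so |c/a| is largest
    at theta = pi, where it equals E/D.  The lower bound on lambda_I is the
    positivity of a quadratic in y with negative discriminant; the upper bound is
    the value of Re(b/a) at theta = pi. *)

From Stdlib Require Import Reals List Lra Psatz.
From Coquelicot Require Import Coquelicot.
Open Scope R_scope.

Lemma trig_aux_app0 (l : list R) (j : nat) (t : R) :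
  trig_aux (l ++ 0 :: nil) j t = trig_aux l j t.
Proof.
  revert j; induction l as [|x l IH]; intro j; simpl.
  - rewrite Cmult_0_l; apply Cplus_0_l.
  - now rewrite IH.
Qed.

Lemma trig_app0 (l : list R) (t : R) : trig (l ++ 0 :: nil) t = trig l t.
Proof. apply trig_aux_app0. Qed.

Lemma trig3 (p0 p1 p2 t : R) :
  trig (p0 :: p1 :: p2 :: nil) t =
  (p0 + p1 * cos t + p2 * (2 * cos t ^ 2 - 1), sin t * (p1 + 2 * p2 * cos t)).
Proof.
  unfold trig; simpl; unfold cexpi.
  rewrite cos_2a_cos, sin_2a, Rmult_0_l, cos_0, sin_0, !Rmult_1_l.
  apply injective_projections; simpl; ring.
Qed.

(** [Cdot z w = Re (z * conj w)]. *)
Definition Cdot (z w : C) : R := fst z * fst w + snd z * snd w.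

Lemma Cmod_Cdot (z : C) : Cmod z = sqrt (Cdot z z).
Proof. unfold Cmod, Cdot; f_equal; ring. Qed.

Lemma Cdot_self_neq0 (z : C) : z <> 0%C -> Cdot z z <> 0.
Proof.
  destruct z as [u v]; unfold Cdot; simpl; intros hz h.
  apply hz, injective_projections; simpl; nra.
Qed.

Lemma Re_Cdiv (z w : C) : w <> 0%C -> fst (z / w)%C = Cdot z w / Cdot w w.
Proof.
  intro hw; pose proof (Cdot_self_neq0 w hw) as hn.
  destruct z as [u v], w as [p q]; unfold Cdot in *; simpl in *.
  unfold Cdiv, Cmult, Cinv; simpl; field; lra.
Qed.

(** [Re (p(t) conj q(t))] for [p, q] of degree 2, as a polynomial in [cos t]. *)
Definition dot_cos (p0 p1 p2 q0 q1 q2 x : R) : R :=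
  (p0*q0 + p1*q1 + p2*q2 - p0*q2 - p2*q0)
  + (p0*q1 + p1*q0 + p1*q2 + p2*q1) * x + 2 * (p0*q2 + p2*q0) * x ^ 2.

Lemma Cdot_trig3 (p0 p1 p2 q0 q1 q2 t : R) :
  Cdot (trig (p0 :: p1 :: p2 :: nil) t) (trig (q0 :: q1 :: q2 :: nil) t) =
  dot_cos p0 p1 p2 q0 q1 q2 (cos t).
Proof.
  assert (hs : sin t * sin t = 1 - cos t * cos t)
    by (pose proof (sin2_cos2 t) as h; unfold Rsqr in h; lra).
  rewrite !trig3; unfold Cdot, dot_cos; simpl.
  replace (sin t * (p1 + 2 * p2 * cos t) * (sin t * (q1 + 2 * q2 * cos t)))
    with (sin t * sin t * ((p1 + 2 * p2 * cos t) * (q1 + 2 * q2 * cos t))) by ring.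
  rewrite hs; ring.
Qed.

Lemma is_max_on_circle_cos (f g : R -> R) (x0 v : R) :
  (forall t, f t = g (cos t)) -> -1 <= x0 <= 1 -> g x0 = v ->
  (forall x, -1 <= x <= 1 -> g x <= v) -> is_max_on_circle f v.
Proof.
  intros hf hx0 hv hg; pose proof PI_RGT_0; split.
  - exists (acos x0); pose proof (acos_bound x0).
    split; [lra|]; now rewrite hf, cos_acos.
  - intros t _; rewrite hf; apply hg, COS_bound.
Qed.

Lemma is_min_on_circle_cos (f g : R -> R) (x0 v : R) :
  (forall t, f t = g (cos t)) -> -1 <= x0 <= 1 -> g x0 = v ->
  (forall x, -1 <= x <= 1 -> v <= g x) -> is_min_on_circle f v.
Proof.
  intros hf hx0 hv hg; pose proof PI_RGT_0; split.
  - exists (acos x0); pose proof (acos_bound x0).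
    split; [lra|]; now rewrite hf, cos_acos.
  - intros t _; rewrite hf; apply hg, COS_bound.
Qed.

Lemma ratio_bounds_rescale (l lo hi D E : R) : 0 < D -> 0 < E ->
  lo / D <= l <= hi / D -> lo / E <= l / (E / D) <= hi / E.
Proof.
  intros hD hE hl.
  assert (hDE : 0 <= D / E) by (apply Rlt_le, Rdiv_lt_0_compat; assumption).
  replace (l / (E / D)) with (l * (D / E)) by (field; lra).
  replace (lo / E) with (lo / D * (D / E)) by (field; lra).
  replace (hi / E) with (hi / D * (D / E)) by (field; lra).
  split; apply Rmult_le_compat_r; tauto.
Qed.

Section GBDF3.

Variable be : R.
Hypothesis hbe : 1 <= be.

Let D := 6*be^2 + 6*be - 2.
Let E := 6*be^2 + 12*be + 3.

Lemma D_pos : 0 < D.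
Proof. unfold D; nra. Qed.

Lemma E_pos : 0 < E.
Proof. unfold E; nra. Qed.

Definition a_sqnorm (x : R) : R :=
  1 + (1-x)/6 + (be^4 + 2*be^3 + be^2/3 - 2*be/3 - 2/9) * (1-x)^2.
Definition c_sqnorm (x : R) : R :=
  1 + (be^4 + 4*be^3 + 5*be^2 + 2*be) * (1-x)^2.
Definition ba_dot (x : R) : R :=
  1 - (1-x)/6 + (be^4 + be^3 - 5*be^2/6 - be/2) * (1-x)^2.

Lemma Cdot_trig_a (t : R) :
  Cdot (trig (gbdf3_a be) t) (trig (gbdf3_a be) t) = a_sqnorm (cos t).
Proof. unfold gbdf3_a; rewrite Cdot_trig3; unfold dot_cos, a_sqnorm; field. Qed.

Lemma Cdot_trig_c (t : R) :
  Cdot (trig (gbdf3_c be) t) (trig (gbdf3_c be) t) = c_sqnorm (cos t).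
Proof. unfold gbdf3_c; rewrite Cdot_trig3; unfold dot_cos, c_sqnorm; field. Qed.

Lemma Cdot_trig_ba (t : R) :
  Cdot (trig (gbdf3_b be) t) (trig (gbdf3_a be) t) = ba_dot (cos t).
Proof.
  change (gbdf3_b be) with
    (((be^2 + be)/2 :: (1 - be^2) :: (be^2 - be)/2 :: nil) ++ 0 :: nil).
  unfold gbdf3_a; rewrite trig_app0, Cdot_trig3; unfold dot_cos, ba_dot; field.
Qed.

Lemma a_sqnorm_ge1 (x : R) : x <= 1 -> 1 <= a_sqnorm x.
Proof.
  intro hx; unfold a_sqnorm.
  assert (0 < be^4 + 2*be^3 + be^2/3 - 2*be/3 - 2/9).
  { assert (be <= be^2) by nra.
    assert (1 <= be^3) by (replace (be^3) with (be*be^2) by ring; nra).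
    assert (1 <= be^4) by (replace (be^4) with (be*be^3) by ring; nra).
    nra. }
  pose proof (pow2_ge_0 (1 - x)); nra.
Qed.

Lemma a_sqnorm_m1 : a_sqnorm (-1) = (D / 3)^2.
Proof. unfold a_sqnorm, D; field. Qed.

Lemma c_sqnorm_m1 : c_sqnorm (-1) = (E / 3)^2.
Proof. unfold c_sqnorm, E; field. Qed.

Lemma trig_a_neq0 (t : R) : trig (gbdf3_a be) t <> 0%C.
Proof.
  intro h; pose proof (Cdot_trig_a t) as hq; rewrite h in hq.
  pose proof (a_sqnorm_ge1 (cos t) (proj2 (COS_bound t))).
  unfold Cdot in hq; simpl in hq; lra.
Qed.

Lemma c_sqnorm_le (x : R) : -1 <= x <= 1 -> D^2 * c_sqnorm x <= E^2 * a_sqnorm x.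
Proof.
  intro hx; set (y := 1 - x).
  assert (hy : 0 <= y <= 2) by (unfold y; lra).
  assert (E^2 * a_sqnorm x - D^2 * c_sqnorm x
    = (2 - y) * ((2 + 30*be + 57*be^2 + 30*be^3 + 3*be^4) * y
                 + (5/2 + 48*be + 84*be^2 + 36*be^3)))
    by (unfold a_sqnorm, c_sqnorm, D, E, y; field).
  assert (0 <= be^3) by (replace (be^3) with (be*(be*be)) by ring; nra).
  assert (0 <= be^4) by (replace (be^4) with ((be*be)*(be*be)) by ring; nra).
  assert (0 <= (2 - y) * ((2 + 30*be + 57*be^2 + 30*be^3 + 3*be^4) * y
                          + (5/2 + 48*be + 84*be^2 + 36*be^3)))
    by (apply Rmult_le_pos; nra).
  lra.
Qed.

Lemma ba_dot_lower (x : R) : -1 <= x <= 1 -> (6*be^2 - 4) * a_sqnorm x <= D * ba_dot x.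
Proof.
  intro hx; set (y := 1 - x).
  set (p := be^4 + 2*be^3 + 4/3*be^2 - 5/3*be - 8/9).
  set (q := 2*be^2 + be - 1).
  set (r := 2 + 6*be).
  assert (D * ba_dot x - (6*be^2 - 4) * a_sqnorm x = r - q*y + p*y^2)
    by (unfold a_sqnorm, ba_dot, D, y, p, q, r; field).
  assert (hp : 0 < p) by (unfold p; nra).
  assert (hdisc : 0 <= 4*p*r - q^2).
  { unfold p, q, r.
    assert (0 <= be - 1) by lra. assert (0 <= (be-1)^2) by nra.
    assert (0 <= (be-1)^3) by (simpl; nra). assert (0 <= (be-1)^4) by nra.
    assert (0 <= (be-1)^5) by (simpl; nra). nra. }
  assert (0 <= r - q*y + p*y^2).
  { apply (Rmult_le_reg_l (4*p)); [lra|].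
    rewrite Rmult_0_r.
    replace (4*p*(r - q*y + p*y^2)) with ((2*p*y - q)^2 + (4*p*r - q^2)) by ring.
    pose proof (pow2_ge_0 (2*p*y - q)); lra. }
  lra.
Qed.

Lemma fF_gbdf3 (t : R) : fF (gbdf3_a be) t = / sqrt (a_sqnorm (cos t)).
Proof.
  unfold fF; rewrite Cmod_inv by apply trig_a_neq0.
  now rewrite Cmod_Cdot, Cdot_trig_a.
Qed.

Lemma fE_gbdf3 (t : R) :
  fE (gbdf3_a be) (gbdf3_c be) t = sqrt (c_sqnorm (cos t) / a_sqnorm (cos t)).
Proof.
  pose proof (a_sqnorm_ge1 (cos t) (proj2 (COS_bound t))).
  unfold fE; rewrite Cmod_div by apply trig_a_neq0.
  rewrite !Cmod_Cdot, Cdot_trig_a, Cdot_trig_c, sqrt_div_alt; lra.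
Qed.

Lemma fI_gbdf3 (t : R) :
  fI (gbdf3_a be) (gbdf3_b be) t = ba_dot (cos t) / a_sqnorm (cos t).
Proof.
  unfold fI; rewrite Re_Cdiv by apply trig_a_neq0.
  now rewrite Cdot_trig_ba, Cdot_trig_a.
Qed.

Lemma sigmaF_gbdf3 : is_max_on_circle (fF (gbdf3_a be)) 1.
Proof.
  apply (is_max_on_circle_cos _ (fun x => / sqrt (a_sqnorm x)) 1);
    [exact fF_gbdf3 | lra | |].
  - replace (a_sqnorm 1) with 1 by (unfold a_sqnorm; field).
    now rewrite sqrt_1, Rinv_1.
  - intros x hx; pose proof (a_sqnorm_ge1 x (proj2 hx)).
    assert (1 <= sqrt (a_sqnorm x)) by (rewrite <- sqrt_1; apply sqrt_le_1_alt; lra).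
    rewrite <- Rinv_1; apply Rinv_le_contravar; lra.
Qed.

Lemma sigmaE_gbdf3 : is_max_on_circle (fE (gbdf3_a be) (gbdf3_c be)) (E / D).
Proof.
  pose proof D_pos; pose proof E_pos.
  assert (hED : 0 <= E / D) by (apply Rlt_le, Rdiv_lt_0_compat; lra).
  apply (is_max_on_circle_cos _ (fun x => sqrt (c_sqnorm x / a_sqnorm x)) (-1));
    [exact fE_gbdf3 | lra | |].
  - rewrite a_sqnorm_m1, c_sqnorm_m1; replace ((E / 3)^2 / (D / 3)^2) with ((E / D)^2) by (field; lra).
    now apply sqrt_pow2.
  - intros x hx; pose proof (a_sqnorm_ge1 x (proj2 hx)).
    pose proof (c_sqnorm_le x hx).
    rewrite <- (sqrt_pow2 (E / D)) by exact hED.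
    apply sqrt_le_1_alt.
    apply (Rmult_le_reg_r (D^2 * a_sqnorm x)); [nra|].
    replace (c_sqnorm x / a_sqnorm x * (D^2 * a_sqnorm x)) with (D^2 * c_sqnorm x)
      by (field; lra).
    replace ((E / D)^2 * (D^2 * a_sqnorm x)) with (E^2 * a_sqnorm x) by (field; lra).
    assumption.
Qed.

Lemma lambdaI_gbdf3 : exists lamI : R,
  is_min_on_circle (fI (gbdf3_a be) (gbdf3_b be)) lamI /\
  (6*be^2 - 4) / D <= lamI <= (6*be^2 - 3) / D.
Proof.
  pose proof D_pos.
  set (g x := ba_dot x / a_sqnorm x).
  destruct (continuity_ab_min g (-1) 1) as [mx [hmin hmx]]; [lra| |].
  { intros x hx; pose proof (a_sqnorm_ge1 x (proj2 hx)).
    apply derivable_continuous_pt; unfold g, ba_dot, a_sqnorm in *; reg; lra. }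
  exists (g mx); split; [apply (is_min_on_circle_cos _ g mx); auto; exact fI_gbdf3|].
  pose proof (a_sqnorm_ge1 mx (proj2 hmx)).
  split.
  - pose proof (ba_dot_lower mx hmx).
    unfold g; apply (Rmult_le_reg_r (D * a_sqnorm mx)); [nra|].
    replace ((6*be^2 - 4) / D * (D * a_sqnorm mx)) with ((6*be^2 - 4) * a_sqnorm mx)
      by (field; lra).
    replace (ba_dot mx / a_sqnorm mx * (D * a_sqnorm mx)) with (D * ba_dot mx)
      by (field; lra).
    assumption.
  - replace ((6*be^2 - 3) / D) with (g (-1))
      by (unfold g; rewrite a_sqnorm_m1; unfold ba_dot, D in *; field; lra).
    apply hmin; lra.
Qed.

End GBDF3.

Theorem mainTheorem7 (be : R) (hbe : 1 <= be) :
  let a := gbdf3_a be in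
  let b := gbdf3_b be in
  let c := gbdf3_c be in
  (forall t, 0 <= t < 2 * PI -> trig a t <> 0%C) /\
  is_max_on_circle (fF a) 1 /\
  is_max_on_circle (fE a c) ((6*be^2 + 12*be + 3) / (6*be^2 + 6*be - 2)) /\
  exists lamI : R,
    is_min_on_circle (fI a b) lamI /\
    (6*be^2 - 4) / (6*be^2 + 6*be - 2) <= lamI <= (6*be^2 - 3) / (6*be^2 + 6*be - 2) /\
    (6*be^2 - 4) / (6*be^2 + 12*be + 3)
      <= lamI / ((6*be^2 + 12*be + 3) / (6*be^2 + 6*be - 2))
      <= (6*be^2 - 3) / (6*be^2 + 12*be + 3).
Proof.
  intros a b c.
  split; [intros t _; now apply trig_a_neq0|].
  split; [now apply sigmaF_gbdf3|].
  split; [now apply sigmaE_gbdf3|].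
  destruct (lambdaI_gbdf3 be hbe) as [lamI [hmin hbounds]].
  exists lamI; split; [exact hmin|]; split; [exact hbounds|].
  apply ratio_bounds_rescale; [exact (D_pos be hbe) | exact (E_pos be hbe) | exact hbounds].
Qed.
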